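(* Suppose $f:2^E\times O^E\to\mathbb{R}_{\ge0}$ satisfies: (1) for every $e\in E$ and every partial realization $\psi$ (with positive probability) with $e\notin\mathrm{dom}(\psi)$, $O(e,\psi)=O(e,\emptyset)$; (2) $f$ is pointwise submodular and pointwise monotone with respect to $p(\phi)$; (3) $f$ satisfies minimal dependency. Then $f$ is worst-case monotone and worst-case submodular with respect to $p(\phi)$ (and satisfies minimal dependency).
   Context: Setting. $E$ is a finite set of $n$ items and $O$ a finite set of states. A realization is a function $\phi:E\to O$; $p$ is a probability distribution (prior) on the set of all realizations, $\Phi$ denotes a random realization with law $p$, and $U^+=\{\phi: p(\phi)>0\}$. A partial realization is a function $\psi:S\to O$ with $S\subseteq E$, $\mathrm{dom}(\psi)=S$; it is identified with the set of pairs $\{(e,\psi(e)):e\in S\}$, so $\psi\subseteq\psi'$ means $\mathrm{dom}(\psi)\subseteq\mathrm{dom}(\psi')$ and they agree on $\mathrm{dom}(\psi)$. A realization $\phi$ is consistent with $\psi$, written $\phi\sim\psi$, if it agrees with $\psi$ on $\mathrm{dom}(\psi)$. Only partial realizations with $\Pr[\Phi\sim\psi]>0$ are considered, and $p(\phi\mid\psi)=\Pr[\Phi=\phi\mid\Phi\sim\psi]$. For $S\subseteq E$ and a partial realization $\psi$, $f(S,\psi)=\mathbb{E}[f(S,\Phi)\mid\Phi\sim\psi]$. For $e\notin\mathrm{dom}(\psi)$, let $O(e,\psi)=\{o\in O:\exists\phi\text{ with }p(\phi\mid\psi)>0,\ \phi(e)=o\}$ and define the worst-case marginal utility $f_{wc}(e\mid\psi)=\min_{o\in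 O(e,\psi)}\{f(\mathrm{dom}(\psi)\cup\{e\},\psi\cup\{(e,o)\})-f(\mathrm{dom}(\psi),\psi)\}$. $f$ is worst-case submodular if $f_{wc}(e\mid\psi)\ge f_{wc}(e\mid\psi')$ for all partial realizations $\psi\subseteq\psi'$ and all $e\in E\setminus\mathrm{dom}(\psi')$; it is worst-case monotone if $f_{wc}(e\mid\psi)\ge0$ for all $\psi$ and $e\notin\mathrm{dom}(\psi)$. $f$ satisfies minimal dependency if $f(\mathrm{dom}(\psi),\psi)=f(\mathrm{dom}(\psi),\phi)$ for every partial realization $\psi$ and every $\phi\in U^+$ with $\phi\sim\psi$. $f$ is pointwise submodular (resp. pointwise monotone) if for every $\phi\in U^+$ the set function $S\mapsto f(S,\phi)$ is submodular (resp. monotone nondecreasing). *)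

From HB Require Import structures.
From mathcomp Require Import all_boot all_order all_algebra.
Set Implicit Arguments.
Unset Strict Implicit.
Unset Printing Implicit Defensive.
Import Order.TTheory GRing.Theory Num.Theory.
Local Open Scope ring_scope.

Section Adaptive.
Variables (R : realFieldType) (E O : finType).

Definition realization := {ffun E -> O}.

(* A partial realization psi : S -> O is encoded as a finite function
   E -> option O, with dom(psi) = {e | psi e <> None}. *)
Definition prealization := {ffun E -> option O}.

Definition dom (psi : prealization) : {set E} := [set e | psi e != None].

Definition pempty : prealization := [ffun => None].

Definition pext (psi : prealization) (e : E) (o : O) : prealization :=
  [ffun x => if x == e then Some o else psi x].

Definition psubset (psi psi' : prealization) : Prop :=
  forall e o, psi e = Some o -> psi' e = Some o.

Definition consistent (phi : realization) (psi : prealization) : bool :=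
  [forall e, if psi e is Some o then phi e == o else true].

Definition is_prior (p : realization -> R) : Prop :=
  (forall phi, 0 <= p phi) /\ \sum_(phi : realization) p phi = 1.

Definition prob_cons (p : realization -> R) (psi : prealization) : R :=
  \sum_(phi : realization | consistent phi psi) p phi.

Definition pcond (p : realization -> R) (phi : realization) (psi : prealization) : R :=
  (if consistent phi psi then p phi else 0) / prob_cons p psi.

(* f(S, psi) = E[f(S, Phi) | Phi ~ psi] *)
Definition fexp (p : realization -> R) (f : {set E} -> realization -> R)
  (S : {set E}) (psi : prealization) : R :=
  (\sum_(phi : realization | consistent phi psi) p phi * f S phi) / prob_cons p psi.

Definition Oset (p : realization -> R) (e : E) (psi : prealization) : {set O} :=
  [set o | [exists phi : realization, (0 < pcond p phi psi) && (phi e == o)]].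

(* minimum of g over a finite set A (0 if A is empty, which never happens for
   partial realizations of positive probability) *)
Definition setmin (A : {set O}) (g : O -> R) : R :=
  if [pick o in A] is Some o0 then \big[Num.min/g o0]_(o in A) g o else 0.

Definition fwc (p : realization -> R) (f : {set E} -> realization -> R)
  (e : E) (psi : prealization) : R :=
  setmin (Oset p e psi)
    (fun o => fexp p f (dom psi :|: [set e]) (pext psi e o) - fexp p f (dom psi) psi).

Definition worst_case_submodular p f : Prop :=
  forall (psi psi' : prealization) (e : E),
    0 < prob_cons p psi -> 0 < prob_cons p psi' ->
    psubset psi psi' -> e \notin dom psi' ->
    fwc p f e psi' <= fwc p f e psi.

Definition worst_case_monotone p f : Prop :=
  forall (psi : prealization) (e : E),
    0 < prob_cons p psi -> e \notin dom psi -> 0 <= fwc p f e psi.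

Definition minimal_dependency p f : Prop :=
  forall (psi : prealization) (phi : realization),
    0 < prob_cons p psi -> 0 < p phi -> consistent phi psi ->
    fexp p f (dom psi) psi = f (dom psi) phi.

Definition submodular_set (g : {set E} -> R) : Prop :=
  forall (A B : {set E}) (e : E), A \subset B -> e \notin B ->
    g (B :|: [set e]) - g B <= g (A :|: [set e]) - g A.

Definition monotone_set (g : {set E} -> R) : Prop :=
  forall A B : {set E}, A \subset B -> g A <= g B.

Definition pointwise_submodular (p : realization -> R) (f : {set E} -> realization -> R) : Prop :=
  forall phi, 0 < p phi -> submodular_set (fun S => f S phi).

Definition pointwise_monotone (p : realization -> R) (f : {set E} -> realization -> R) : Prop :=
  forall phi, 0 < p phi -> monotone_set (fun S => f S phi).

End Adaptive.

From HB Require Import structures.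
From mathcomp Require Import all_boot all_order all_algebra.
Import Order.TTheory GRing.Theory Num.Theory.
Local Open Scope ring_scope.

Set Implicit Arguments.
Unset Strict Implicit.

(* Under minimal dependency, the expected marginal gain of an
   item e after observing psi and then the state o of e is a pointwise
   quantity: for any realization phi of positive prior probability that is
   consistent with psi and has phi e = o, it equals
       f (dom psi :|: [set e]) phi - f (dom psi) phi       (marginal_pointwise).
   Every state o in O(e, psi) is witnessed by such a phi      (Oset_witness).
   Hence f_wc(e | psi) is a minimum of pointwise marginal gains:
   - pointwise monotonicity makes each of them nonnegative, so f_wc >= 0;
   - for psi \subseteq psi', hypothesis (1) gives O(e, psi) = O(e, psi'),
     a witness for psi' is also a witness for psi, and pointwise
     submodularity compares the two gains term by term (setmin_le). *)

Section SetMin.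
Variables (R : realFieldType) (O : finType).

Lemma setmin_ge0 (A : {set O}) (g : O -> R) :
  (forall o, o \in A -> 0 <= g o) -> 0 <= setmin A g.
Proof.
move=> g_ge0; rewrite /setmin; case: pickP => [o0 Ao0|_] //.
apply: (big_ind (fun x => 0 <= x)); [exact: g_ge0 | | exact: g_ge0].
by move=> x y x_ge0 y_ge0; rewrite le_min x_ge0 y_ge0.
Qed.

Lemma setmin_le (A : {set O}) (g g' : O -> R) :
  (forall o, o \in A -> g' o <= g o) -> setmin A g' <= setmin A g.
Proof.
move=> le_g'g; rewrite /setmin; case: pickP => [o0 Ao0|_] //.
apply: (big_ind2 (fun x y => x <= y)); [exact: le_g'g | | exact: le_g'g].
move=> x1 x2 y1 y2 le_x1 le_x2; rewrite le_min.
by apply/andP; split; rewrite ge_min ?le_x1 ?le_x2 ?orbT.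
Qed.

End SetMin.

Section PartialRealizations.
Variables (E O : finType).
Implicit Types (phi : realization E O) (psi : prealization E O).

Lemma dom_pext psi e o : dom (pext psi e o) = dom psi :|: [set e].
Proof.
apply/setP => x; rewrite !inE ffunE.
by case: (x =P e) => [->|_] /=; rewrite ?eqxx ?orbT ?orbF.
Qed.

Lemma consistent_pext phi psi e o :
  consistent phi psi -> phi e = o -> consistent phi (pext psi e o).
Proof.
move=> /forallP phi_psi phi_e; apply/forallP => x; rewrite ffunE.
by case: eqP => [->|_]; [rewrite phi_e | exact: phi_psi].
Qed.

Lemma consistent_psubset phi psi psi' :
  psubset psi psi' -> consistent phi psi' -> consistent phi psi.
Proof.
move=> sub /forallP phi_psi'; apply/forallP => x.
case psi_x: (psi x) => [o|] //.
by have := phi_psi' x; rewrite (sub _ _ psi_x).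
Qed.

Lemma dom_psubset psi psi' : psubset psi psi' -> dom psi \subset dom psi'.
Proof.
move=> sub; apply/subsetP => x; rewrite !inE.
by case psi_x: (psi x) => [o|] //= _; rewrite (sub _ _ psi_x).
Qed.

End PartialRealizations.

Section Conditioning.
Variables (R : realFieldType) (E O : finType) (p : realization E O -> R).
Hypothesis p_ge0 : forall phi, 0 <= p phi.
Implicit Types (phi : realization E O) (psi : prealization E O).

Lemma prob_cons_ge phi psi : consistent phi psi -> p phi <= prob_cons p psi.
Proof.
by move=> phi_psi; rewrite /prob_cons (bigD1 phi) //= lerDl sumr_ge0.
Qed.

Lemma Oset_witness psi e o :
  0 < prob_cons p psi -> o \in Oset p e psi ->
  exists phi, [/\ consistent phi psi, 0 < p phi & phi e = o].
Proof.
move=> psi_pos; rewrite inE => /existsP [phi /andP [cond_pos /eqP phi_e]].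
exists phi; move: cond_pos; rewrite /pcond.
case: (consistent phi psi); last by rewrite mul0r ltxx.
by rewrite ltr_pdivlMr // mul0r.
Qed.

Variable f : {set E} -> realization E O -> R.
Hypothesis f_md : minimal_dependency p f.

Lemma marginal_pointwise psi e o phi :
  0 < prob_cons p psi -> consistent phi psi -> 0 < p phi -> phi e = o ->
  fexp p f (dom psi :|: [set e]) (pext psi e o) - fexp p f (dom psi) psi
  = f (dom psi :|: [set e]) phi - f (dom psi) phi.
Proof.
move=> psi_pos phi_psi phi_pos phi_e.
have phi_ext := consistent_pext phi_psi phi_e.
have ext_pos : 0 < prob_cons p (pext psi e o).
  exact: lt_le_trans phi_pos (prob_cons_ge phi_ext).
by rewrite -(dom_pext psi e o) (f_md ext_pos phi_pos phi_ext) dom_pext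
           (f_md psi_pos phi_pos phi_psi).
Qed.

End Conditioning.

Theorem proposition2 (R : realFieldType) (E O : finType)
  (p : realization E O -> R) (f : {set E} -> realization E O -> R) :
  is_prior p ->
  (forall (S : {set E}) (phi : realization E O), 0 <= f S phi) ->
  (forall (e : E) (psi : prealization E O),
      0 < prob_cons p psi -> e \notin dom psi ->
      Oset p e psi = Oset p e (pempty E O)) ->
  pointwise_submodular p f ->
  pointwise_monotone p f ->
  minimal_dependency p f ->
  [/\ worst_case_monotone p f, worst_case_submodular p f & minimal_dependency p f].
Proof.
move=> [p_ge0 _] _ Oset_const f_sub f_mon f_md; split => //.
- move=> psi e psi_pos _; apply: setmin_ge0 => o /(Oset_witness psi_pos).
  move=> [phi [phi_psi phi_pos phi_e]].
  rewrite (marginal_pointwise p_ge0 f_md psi_pos phi_psi phi_pos phi_e).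
  by rewrite subr_ge0 (f_mon _ phi_pos) ?subsetUl.
- move=> psi psi' e psi_pos psi'_pos sub e_psi'.
  have e_psi : e \notin dom psi.
    by apply: contra e_psi'; apply/subsetP/dom_psubset.
  rewrite /fwc (Oset_const _ _ psi_pos e_psi) -(Oset_const _ _ psi'_pos e_psi').
  apply: setmin_le => o /(Oset_witness psi'_pos).
  move=> [phi [phi_psi' phi_pos phi_e]].
  have phi_psi := consistent_psubset sub phi_psi'.
  rewrite (marginal_pointwise p_ge0 f_md psi'_pos phi_psi' phi_pos phi_e).
  rewrite (marginal_pointwise p_ge0 f_md psi_pos phi_psi phi_pos phi_e).
  by apply: (f_sub _ phi_pos); [exact: dom_psubset|].
Qed.
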